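(* Let $D$ be a Dyck path of length $2n$ and let $D_1\sqsubset D_2\sqsubset\cdots\sqsubset D_n=D$ be an $n$-chain of Dyck shapes ending at $D$; set $D_0$ to be the empty path. Fill $S(D)$ by putting one dot in the leftmost cell (the cell with smallest first coordinate) of each ribbon $S(D_i)\setminus S(D_{i-1})$, $1\le i\le n$. Then the result is a Laguerre history of shape $D$, and this construction is a bijection between $n$-chains of Dyck shapes ending at $D$ and Laguerre histories of shape $D$.
   Context: A Dyck path of length $2m$ is a lattice path from $(0,0)$ to $(2m,0)$ with steps $\nearrow=(1,1)$, $\searrow=(1,-1)$ never going below the $x$-axis; $P(x)$ denotes its height at abscissa $x$. A cell is a point $(a,b)\in\mathbb{Z}^2$ with $b\ge0$, $a+b$ even (the tilted square with vertices $(a,b),(a+1,b\pm1),(a+2,b)$). The Dyck shape of $P$ (length $2m$) is $S(P)=\{(a,b): b\ge0,\ a+b\text{ even},\ 0\le a\le 2m-2,\ b+1\le P(a+1)\}$. Cells are adjacent if they differ by $(\pm1,\pm1)$. A ribbon is a nonempty set of cells, connected for adjacency, containing no four cells $(a,b),(a+1,b+1),(a+1,b-1),(a+2,b)$. For Dyck paths $D$ of length $2m$ and $E$ of length $2m+2$, $D\sqsubset E$ means $S(D)\subseteq S(E)$ and $S(E)\setminus S(D)$ is a ribbon. An $n$-chain of Dyck shapes is a sequence $D_1\sqsubset\cdots\sqsubset D_n$ of Dyck paths with $D_i$ of length $2i$; it ends at $D_n$. The column $a$ of $S(D)$ is the set of its cells with first coordinate $a$; it is below a step $\nearrow$ if the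 $(a+1)$-st step of $D$ is $\nearrow$. A Laguerre history of shape $D$ (length $2n$) is a filling of $S(D)$ with $n$ dots (at most one per cell) such that each column below a step $\nearrow$ contains exactly one dot and the other columns contain none. *)

From HB Require Import structures.
From mathcomp Require Import all_boot all_order all_algebra.
From mathcomp Require Import finmap.
Set Implicit Arguments. Unset Strict Implicit. Unset Printing Implicit Defensive.
Import Order.TTheory GRing.Theory Num.Theory.
Local Open Scope fset_scope.

(* A lattice path is a sequence of steps: true = up (1,1), false = down (1,-1). *)
Definition path_t := seq bool.

Definition height (P : path_t) (x : nat) : int :=
  \sum_(i < x) (if nth false P i then 1 else -1 : int)%R.

Definition dyck (m : nat) (P : path_t) : Prop :=
  size P = (2 * m)%N /\ (forall x, (x <= 2 * m)%N -> (0 <= height P x)%R)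
  /\ height P (2 * m) = 0%R.

(* Cells are points (a,b) with a,b >= 0 (all cells of Dyck shapes have a >= 0). *)
Definition cell := (nat * nat)%type.

Definition inShape (P : path_t) (c : cell) : bool :=
  [&& ~~ odd (c.1 + c.2), (c.1 + 2 <= size P)%N & ((c.2 + 1)%:Z <= height P (c.1 + 1))%R].

(* S(P) as a finite set: all its cells satisfy a < size P and b < size P. *)
Definition shape (P : path_t) : {fset cell} :=
  [fset c in [seq (a, b) | a <- iota 0 (size P), b <- iota 0 (size P)] | inShape P c].

Definition adjacent : rel cell := fun c d =>
  ((c.1 == d.1 + 1) || (d.1 == c.1 + 1))%N && ((c.2 == d.2 + 1) || (d.2 == c.2 + 1))%N.

(* A ribbon: nonempty, connected for adjacency, containing no four cells
   (a,b),(a+1,b+1),(a+1,b-1),(a+2,b) (here written with b := b'+1 >= 1). *)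
Definition ribbon (R : {fset cell}) : Prop :=
  [/\ R != fset0,
      (forall c d, c \in R -> d \in R ->
         exists p : seq cell, [/\ path adjacent c p, last c p = d & all (fun x => x \in R) p])
    & (forall a b, ~~ [&& (a, b.+1) \in R, (a.+1, b.+2) \in R, (a.+1, b) \in R
                        & (a.+2, b.+1) \in R])].

Definition sqsub (D E : path_t) : Prop :=
  shape D `<=` shape E /\ ribbon (shape E `\` shape D).

(* ch = [:: D_1; ...; D_n] is an n-chain of Dyck shapes ending at D. *)
Definition is_chain (n : nat) (D : path_t) (ch : seq path_t) : Prop :=
  [/\ size ch = n,
      (forall i, (i < n)%N -> dyck i.+1 (nth [::] ch i)),
      (forall i, (i.+1 < n)%N -> sqsub (nth [::] ch i) (nth [::] ch i.+1))
    & last [::] ch = D].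

(* D_i with D_0 the empty path. *)
Definition chainD (ch : seq path_t) (i : nat) : path_t := nth [::] ([::] :: ch) i.

Definition chainRibbon (ch : seq path_t) (i : nat) : {fset cell} :=
  shape (chainD ch i) `\` shape (chainD ch i.-1).

Definition leftmost (R : {fset cell}) : {fset cell} :=
  [fset c in R | all (fun d : cell => (c.1 <= d.1)%N) R].

Definition chain_filling (n : nat) (ch : seq path_t) : {fset cell} :=
  \bigcup_(i <- iota 1 n) leftmost (chainRibbon ch i).

(* A Laguerre history of shape D: a set of dotted cells of S(D) (at most one dot per
   cell) such that the column a contains exactly one dot if the (a+1)-st step of D
   is an up step, and none otherwise. *)
Definition laguerre (D : path_t) (F : {fset cell}) : Prop :=
  F `<=` shape D /\
  forall a : nat, #|` [fset c in F | c.1 == a] | = (if nth false D a then 1 else 0)%N.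

(* [sqsub P E] holds exactly when E arises from P by turning the down step at some
   abscissa l into an up step and appending a final down step, i.e. when E is P
   raised by 2 after l.  The ribbon S(E) \ S(P) is then the strip of topmost cells
   of E over the columns l, ..., 2m, and its leftmost cell (l, P(l)) lies in the
   column of the new up step.  So each ribbon of a chain puts its dot in a column
   below a new up step, and the filling is a Laguerre history by induction on n.
   Conversely, the dot added last is the rightmost dot of the filling lying on the
   upper boundary of S(D): every dot to its right sits at least 2 below the
   boundary.  Removing that dot and lowering D at its column undoes the last step
   of the chain; this gives injectivity and, applied to an arbitrary Laguerre
   history, surjectivity. *)

From HB Require Import structures.
From mathcomp Require Import all_boot all_order all_algebra.
From mathcomp Require Import finmap.
From mathcomp Require Import zify.
Set Implicit Arguments. Unset Strict Implicit. Unset Printing Implicit Defensive.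
Import Order.TTheory GRing.Theory Num.Theory.
Local Open Scope fset_scope.

Lemma fset_argmax (T : choiceType) (f : T -> nat) (S : {fset T}) :
  S != fset0 -> exists2 x, x \in S & forall y, y \in S -> (f y <= f x)%N.
Proof.
case/fset0Pn => x0 Hx0.
case: (@arg_maxnP S [` Hx0] xpredT (fun i => f (val i))) => // i _ Hi.
exists (val i) => [|y Hy]; first exact: valP.
exact: (Hi [` Hy]).
Qed.

Lemma height0 (P : path_t) : height P 0 = 0%R.
Proof. by rewrite /height big_ord0. Qed.

Lemma heightS (P : path_t) x :
  height P x.+1 = (height P x + (if nth false P x then 1 else -1))%R.
Proof. by rewrite /height big_ord_recr. Qed.

Lemma height_step (P : path_t) x :
  (height P x.+1 = height P x + 1 /\ nth false P x = true \/
   height P x.+1 = height P x - 1 /\ nth false P x = false)%R.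
Proof. by rewrite heightS; case: (nth false P x); [left|right]. Qed.

Lemma height_downs (P : path_t) x :
  exists2 k : nat, height P x = (Posz x - 2 * Posz k)%R & (k <= x)%N.
Proof.
elim: x => [|x [k Hk Hkx]]; first by exists 0%N; rewrite ?height0.
rewrite heightS Hk; case: (nth false P x); [exists k | exists k.+1]; lia.
Qed.

Lemma height_parity (P : path_t) x : exists k : int, height P x = (Posz x - 2 * k)%R.
Proof. by have [k Hk _] := height_downs P x; exists (Posz k). Qed.

Lemma height_past_end (P : path_t) x : (size P <= x)%N -> height P x.+1 = (height P x - 1)%R.
Proof. by move=> H; rewrite heightS nth_default. Qed.

Lemma eq_from_height (P1 P2 : path_t) : size P1 = size P2 ->
  (forall x, (x <= size P1)%N -> height P1 x = height P2 x) -> P1 = P2.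
Proof.
move=> Hs Hh; apply: (eq_from_nth (x0 := false) Hs) => x Hx.
have := Hh x ltac:(lia); have := Hh x.+1 Hx.
by rewrite !heightS; case: (nth false P1 x); case: (nth false P2 x); lia.
Qed.

Lemma mem_shape (P : path_t) (c : cell) : (c \in shape P) = inShape P c.
Proof.
rewrite /shape !inE; case H: (inShape P c); rewrite ?andbF ?andbT //.
case: c H => a b /= /and3P [Hp Ha Hb].
have [k Hk _] := height_downs P (a + 1).
apply/allpairsP; exists (a, b); split => //; rewrite mem_iota; simpl in *; lia.
Qed.

(* The height as a natural number; only meaningful on nonnegative heights. *)
Definition nheight (P : path_t) x : nat := absz (height P x).

Section DyckPath.
Variables (m : nat) (P : path_t).
Hypothesis hP : dyck m P.

Lemma dyck_size : size P = (2 * m)%N.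
Proof. by case: hP. Qed.

Lemma dyck_height_ge0 x : (x <= 2 * m)%N -> (0 <= height P x)%R.
Proof. by case: hP => _ [H _]; apply: H. Qed.

Lemma dyck_height_end : height P (2 * m) = 0%R.
Proof. by case: hP => _ []. Qed.

Lemma dyck_height_past_end : height P (2 * m).+1 = (-1)%R.
Proof. by rewrite height_past_end ?dyck_size ?dyck_height_end. Qed.

Lemma dyck_nth_past_end x : (2 * m <= x)%N -> nth false P x = false.
Proof. by move=> H; rewrite nth_default ?dyck_size. Qed.

Lemma nheightE x : (x <= 2 * m)%N -> Posz (nheight P x) = height P x.
Proof. by move=> H; rewrite /nheight gez0_abs ?dyck_height_ge0. Qed.

End DyckPath.

Lemma dyck_last_step m (E : path_t) : dyck m.+1 E ->
  height E (2 * m).+1 = 1%R /\ nth false E (2 * m).+1 = false.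
Proof.
move=> hE; have h0 := dyck_height_end hE.
have hge := dyck_height_ge0 hE (x := (2 * m).+1) ltac:(lia).
rewrite (_ : (2 * m.+1 = (2 * m).+2)%N) in h0; last by lia.
by case: (height_step E (2 * m).+1) => [[]|[]]; lia.
Qed.

Lemma dyck_nil : dyck 0 [::].
Proof.
split; first by rewrite muln0.
split; last by rewrite muln0 height0.
by move=> x; rewrite muln0 leqn0 => /eqP ->; rewrite height0.
Qed.

(** * Raising a Dyck path *)

(* [E] is [P] with its down step at abscissa [l] turned into an up step and a
   final down step appended: the heights agree up to [l] and differ by 2 after. *)
Definition raised (m : nat) (P E : path_t) (l : nat) : Prop :=
  [/\ (l <= 2 * m)%N, (forall x, (x <= l)%N -> height E x = height P x)
    & (forall x, (l < x <= (2 * m).+1)%N -> height E x = (height P x + 2)%R)].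

Lemma adjacent_sym : symmetric adjacent.
Proof. by move=> c d; rewrite /adjacent orbC [in X in _ && X]orbC. Qed.

Section Raised.
Variables (m : nat) (P E : path_t) (l : nat).
Hypotheses (hP : dyck m P) (hE : dyck m.+1 E) (hR : raised m P E l).

Lemma raised_height x : (x <= (2 * m).+1)%N ->
  height E x = (height P x + (if (x <= l)%N then 0 else 2))%R.
Proof.
case: hR => Hl H1 H2 Hx; case: leqP => H; first by rewrite H1 // addr0.
by rewrite H2 // H Hx.
Qed.

Lemma mem_raised_ribbon (c : cell) : (c \in shape E `\` shape P) =
  ((l <= c.1 <= 2 * m)%N && (Posz (c.2 + 1) == height E (c.1 + 1))%R).
Proof.
case: hR => Hl H1 H2; case: c => a b /=.
rewrite in_fsetD !mem_shape /inShape /= (dyck_size hP) (dyck_size hE).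
have [kE HkE] := height_parity E (a + 1).
have [kP HkP] := height_parity P (a + 1).
have e0 := dyck_height_end hP; have e1 := dyck_height_past_end hP.
have [f1 _] := dyck_last_step hE.
have r1 : (a + 1 <= l)%N -> height E (a + 1) = height P (a + 1) by apply: H1.
have r2 : (l < a + 1 <= (2 * m).+1)%N -> height E (a + 1) = (height P (a + 1) + 2)%R.
  exact: H2.
have g0 : (a + 1 <= 2 * m)%N -> (0 <= height P (a + 1))%R by apply: dyck_height_ge0.
have e0' : (a + 1 = 2 * m)%N -> height P (a + 1) = 0%R by move=> ->.
have e1' : (a + 1 = (2 * m).+1)%N -> height P (a + 1) = (-1)%R by move=> ->.
lia.
Qed.

Lemma raised_steps : [/\ nth false E l = true, nth false P l = false,
  (forall x, x != l -> nth false E x = nth false P x)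
  & height E l.+1 = (height P l + 1)%R].
Proof.
case: hR => Hl _ _.
have a0 := raised_height (x := l) ltac:(lia).
have a1 := raised_height (x := l.+1) ltac:(lia).
rewrite leqnn /= in a0; rewrite ltnn /= in a1.
have sE := height_step E l; have sP := height_step P l.
have [lE1 lE2] := dyck_last_step hE.
split; [lia|lia| |lia].
move=> x Hx; case: (ltnP (2 * m).+1 x) => Hx1.
  by rewrite !nth_default // ?(dyck_size hP) ?(dyck_size hE); lia.
have sE' := height_step E x; have sP' := height_step P x.
case: (ltnP x (2 * m).+1) => Hx2; last first.
  by rewrite (_ : x = (2 * m).+1) ?lE2 ?(dyck_nth_past_end hP) //; lia.
have b0 := raised_height (x := x) ltac:(lia).
have b1 := raised_height (x := x.+1) ltac:(lia).
have [h|h] : (x < l \/ l < x)%N by lia.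
- rewrite (_ : (x <= l)%N) /= in b0; last by lia.
  rewrite (_ : (x.+1 <= l)%N) /= in b1; last by lia.
  lia.
- rewrite (_ : (x <= l)%N = false) /= in b0; last by lia.
  rewrite (_ : (x.+1 <= l)%N = false) /= in b1; last by lia.
  lia.
Qed.

Lemma raised_shape_sub : shape P `<=` shape E.
Proof.
apply/fsubsetP => [[a b]].
rewrite !mem_shape /inShape /= (dyck_size hP) (dyck_size hE) => H.
by have := raised_height (x := a + 1) ltac:(lia); case: leqP => _; lia.
Qed.

Definition top_cell a : cell := (a, (nheight E a.+1).-1).

Lemma raised_height_pos a : (l <= a <= 2 * m)%N -> (1 <= height E a.+1)%R.
Proof.
move=> Ha; have b0 := raised_height (x := a.+1) ltac:(lia).
rewrite (_ : (a.+1 <= l)%N = false) in b0; last by lia.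
have := dyck_height_past_end hP.
have g : (a.+1 <= 2 * m)%N -> (0 <= height P a.+1)%R by apply: dyck_height_ge0.
have e : a.+1 = (2 * m).+1 -> height P a.+1 = height P (2 * m).+1 by move=> ->.
lia.
Qed.

Lemma top_cell_in_ribbon a : (l <= a <= 2 * m)%N -> top_cell a \in shape E `\` shape P.
Proof.
move=> Ha; rewrite mem_raised_ribbon /top_cell /=.
have := raised_height_pos Ha; have := nheightE hE (x := a.+1) ltac:(lia).
rewrite !addn1; lia.
Qed.

Lemma ribbon_top_cell c : c \in shape E `\` shape P ->
  c = top_cell c.1 /\ (l <= c.1 <= 2 * m)%N.
Proof.
case: c => a b; rewrite mem_raised_ribbon /top_cell /= => H.
have := nheightE hE (x := a.+1) ltac:(lia).
rewrite !addn1 in H; split; [congr pair|]; lia.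
Qed.

Lemma top_cell_adjacent a : (l <= a)%N -> (a.+1 <= 2 * m)%N ->
  adjacent (top_cell a) (top_cell a.+1).
Proof.
move=> H1 H2.
have p1 := raised_height_pos (a := a) ltac:(lia).
have p2 := raised_height_pos (a := a.+1) ltac:(lia).
have n1 := nheightE hE (x := a.+1) ltac:(lia).
have n2 := nheightE hE (x := a.+2) ltac:(lia).
have s := height_step E a.+1.
rewrite /adjacent /top_cell /=; lia.
Qed.

Lemma top_cell_path a b : (l <= a <= 2 * m)%N -> (l <= b <= 2 * m)%N ->
  exists p, [/\ path adjacent (top_cell a) p, last (top_cell a) p = top_cell b
              & all (fun x => x \in shape E `\` shape P) p].
Proof.
move=> Ha Hb; case: (leqP a b) => Hab.
- elim: b Hb Hab => [|b IH] Hb Hab.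
    by exists [::]; rewrite (_ : a = 0%N) //; lia.
  case: (eqVneq a b.+1) => [<-|ne]; first by exists [::].
  have [p [Pp Lp Ap]] := IH ltac:(lia) ltac:(lia).
  exists (rcons p (top_cell b.+1)); split.
  + by rewrite rcons_path Pp Lp top_cell_adjacent //; lia.
  + by rewrite last_rcons.
  + by rewrite all_rcons Ap top_cell_in_ribbon.
- elim: a Ha Hab => [|a IH] Ha Hab //.
  have a_next : top_cell a \in shape E `\` shape P by apply: top_cell_in_ribbon; lia.
  have adj : adjacent (top_cell a.+1) (top_cell a).
    by rewrite adjacent_sym top_cell_adjacent //; lia.
  case: (eqVneq a b) => [<-|ne]; first by exists [:: top_cell a]; rewrite /= adj a_next.
  have [p [Pp Lp Ap]] := IH ltac:(lia) ltac:(lia).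
  by exists (top_cell a :: p); split; rewrite /= ?adj ?a_next.
Qed.

Lemma raised_sqsub : sqsub P E.
Proof.
split; first exact: raised_shape_sub.
case: hR => Hl _ _; split.
- apply/eqP => H; have := top_cell_in_ribbon (a := l) ltac:(lia).
  by rewrite H inE.
- move=> c d Hc Hd.
  have [-> hc] := ribbon_top_cell Hc; have [-> hd] := ribbon_top_cell Hd.
  exact: top_cell_path.
- move=> a b; apply/negP => /and4P [_ h2 h3 _].
  by move: h2 h3; rewrite !mem_raised_ribbon /=; lia.
Qed.

Lemma raised_leftmost : leftmost (shape E `\` shape P) = [fset (l, nheight P l)].
Proof.
have [_ _ _ hl] := raised_steps.
case: hR => Hl _ _.
have nP := nheightE hP Hl; have nE := nheightE hE (x := l.+1) ltac:(lia).
apply/fsetP => c; rewrite /leftmost in_fset in_fset1; apply/idP/idP.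
- move=> /andP [Hc /allP /(_ _ (top_cell_in_ribbon (a := l) ltac:(lia)))].
  move: Hc; case: c => a b; rewrite mem_raised_ribbon /= => Hc Hal.
  have ea : a = l by lia.
  subst a; rewrite !addn1 in Hc; apply/eqP; congr pair; lia.
- move=> /eqP ->; apply/andP; split.
  + rewrite mem_raised_ribbon /= !addn1; lia.
  + by apply/allP => d /ribbon_top_cell [_ /andP []].
Qed.

End Raised.

Lemma raised_nil D : dyck 1 D -> raised 0 [::] D 0.
Proof.
move=> hD; have [e1 _] := dyck_last_step hD; have e2 := dyck_height_past_end dyck_nil.
split => // x Hx.
- by rewrite (_ : x = 0%N) ?height0 //; lia.
- by rewrite (_ : x = 1%N); [rewrite muln0 in e1 e2; rewrite e1 e2 | lia].
Qed.

(** * Every ribbon extension is a raising *)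

Lemma path_adjacent_crosses a (c : cell) (p : seq cell) : path adjacent c p ->
  (c.1 <= a <= (last c p).1)%N -> exists2 e, e \in c :: p & e.1 = a.
Proof.
elim: p c => [|x p IH] c /=; first by move=> _ ?; exists c; rewrite ?mem_head //; lia.
move=> /andP [Hcx Hp] Ha; case: (eqVneq c.1 a) => [<-|ne].
  by exists c; rewrite ?mem_head.
have [|e He <-] := IH x Hp; first by move: Hcx; rewrite /adjacent; lia.
by exists e; rewrite // in_cons He orbT.
Qed.

Section SqsubRaised.
Variables (m : nat) (P E : path_t).
Hypotheses (hP : dyck m P) (hE : dyck m.+1 E) (hS : sqsub P E).

Lemma sqsub_height_ge x : (x <= (2 * m).+1)%N -> (height P x <= height E x)%R.
Proof.
move=> Hx; case: hS => Hsub _.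
have [e1 _] := dyck_last_step hE; have e2 := dyck_height_past_end hP.
case: (ltnP x (2 * m).+1) => Hx2; last by rewrite (_ : x = (2 * m).+1) ?e1 ?e2 //; lia.
have gE := dyck_height_ge0 hE (x := x) ltac:(lia).
case: (lerP (height P x) 0) => Hp; first lia.
have x1 : (0 < x)%N by move: Hp; case: (x) => //; rewrite height0.
have e0 := dyck_height_end hP.
have nP := nheightE hP (x := x) ltac:(lia).
have [k Hk] := height_parity P x.
have xx : (x.-1 + 1 = x)%N by lia.
have : (x.-1, (nheight P x).-1) \in shape P.
  rewrite mem_shape /inShape /= xx (dyck_size hP).
  have : x != (2 * m)%N by apply/eqP => ex; move: Hp; rewrite ex e0.
  lia.
by move=> /(fsubsetP Hsub); rewrite mem_shape /inShape /= xx; lia.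
Qed.

(* A gap of 4 at [x] would put the four cells of a 2x2 square into the ribbon. *)
Lemma sqsub_height_le x : (x <= (2 * m).+1)%N -> (height E x <= height P x + 2)%R.
Proof.
move=> Hx; case: hS => Hsub [_ _ Hsquare].
have [e1 _] := dyck_last_step hE; have e2 := dyck_height_past_end hP.
case: (ltnP x (2 * m).+1) => Hx2; last by rewrite (_ : x = (2 * m).+1) ?e1 ?e2 //; lia.
have [kE HkE] := height_parity E x; have [kP HkP] := height_parity P x.
have g := sqsub_height_ge Hx.
rewrite real_leNgt ?num_real //; apply/negP => Hlt.
have H4 : (height P x + 4 <= height E x)%R by lia.
have gP := dyck_height_ge0 hP (x := x) ltac:(lia).
have nP := nheightE hP (x := x) ltac:(lia).
have sE := height_step E x.
have xn : (x <> 2 * m)%N by move=> ex; rewrite ex in sE H4 gP; lia.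
case: x Hx Hx2 HkE HkP g Hlt H4 gP nP sE xn => [|[|y]] Hx Hx2 HkE HkP g Hlt H4 gP nP sE xn;
  try by have [? ? ?] := height_downs E 1; lia.
have sE1 := height_step E y.+1; have sP1 := height_step P y.+1.
have sP2 := height_step P y.+2.
apply: (negP (Hsquare y (nheight P y.+2).+1)).
rewrite !in_fsetD !mem_shape /inShape /= (dyck_size hP) (dyck_size hE) !addn1.
lia.
Qed.

Lemma sqsub_ribbon_column c : c \in shape E `\` shape P ->
  (c.1 <= 2 * m)%N /\ height E (c.1 + 1) = (height P (c.1 + 1) + 2)%R.
Proof.
case: c => a b; rewrite in_fsetD !mem_shape /inShape /= (dyck_size hP) (dyck_size hE).
move=> /andP [HnP /and3P [Hpar Ha2 Hb]]; rewrite Hpar /= in HnP.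
have Ha : (a <= 2 * m)%N by lia.
have ge := sqsub_height_ge (x := a + 1) ltac:(lia).
have le := sqsub_height_le (x := a + 1) ltac:(lia).
have [kE HkE] := height_parity E (a + 1); have [kP HkP] := height_parity P (a + 1).
have [e1 _] := dyck_last_step hE; have e2 := dyck_height_past_end hP.
have endP : a = (2 * m)%N -> height P (a + 1) = (-1)%R by move=> ->; rewrite addn1.
have endE : a = (2 * m)%N -> height E (a + 1) = 1%R by move=> ->; rewrite addn1.
have lastP : (a + 1 = 2 * m)%N -> height P (a + 1) = 0%R.
  by move=> ->; exact: dyck_height_end.
split => //; lia.
Qed.

Lemma sqsub_raised : exists l, raised m P E l.
Proof.
have [e1 _] := dyck_last_step hE; have e2 := dyck_height_past_end hP.
have Hex : exists a, (a <= 2 * m)%N && (height E (a + 1) == height P (a + 1) + 2)%R.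
  by exists (2 * m)%N; rewrite leqnn addn1 e1 e2.
case: (ex_minnP Hex) => l /andP [Hl /eqP Hl2] Hmin.
have cases x : (x <= (2 * m).+1)%N ->
    (height E x = height P x \/ height E x = height P x + 2)%R.
  move=> Hx; have := sqsub_height_ge Hx; have := sqsub_height_le Hx.
  have [kE HkE] := height_parity E x; have [kP HkP] := height_parity P x; lia.
exists l; split => //.
  case=> [|y] Hy; first by rewrite !height0.
  by have := Hmin y; have := cases y.+1 ltac:(lia); rewrite addn1; lia.
case=> [|y] /andP [Hly Hy] //.
case: (eqVneq y l) => [->|ne]; first by rewrite -addn1.
have c0_in : (l, (nheight E (l + 1)).-1) \in shape E `\` shape P.
  rewrite in_fsetD !mem_shape /inShape /= (dyck_size hP) (dyck_size hE).
  have [kE HkE] := height_parity E (l + 1).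
  have nE := nheightE hE (x := l + 1) ltac:(lia).
  have g1 : (l + 1 <= 2 * m)%N -> (0 <= height P (l + 1))%R by apply: dyck_height_ge0.
  have g2 : (l + 1 = (2 * m).+1)%N -> height P (l + 1) = (-1)%R by move=> ->.
  lia.
have d0_in : ((2 * m)%N, 0%N) \in shape E `\` shape P.
  rewrite in_fsetD !mem_shape /inShape /= (dyck_size hP) (dyck_size hE) !addn1 e1 e2.
  lia.
case: hS => _ [_ Hconn _].
have [p [Pp Lp Ap]] := Hconn _ _ c0_in d0_in.
have [e He ey] := path_adjacent_crosses (a := y) Pp ltac:(rewrite Lp /=; lia).
have /sqsub_ribbon_column [_] : e \in shape E `\` shape P.
  by move: He; rewrite in_cons => /orP [/eqP ->|/(allP Ap)].
by rewrite ey addn1.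
Qed.

End SqsubRaised.

Lemma raised_inj m (P1 P2 E : path_t) l : dyck m P1 -> dyck m P2 -> dyck m.+1 E ->
  raised m P1 E l -> raised m P2 E l -> P1 = P2.
Proof.
move=> h1 h2 hE r1 r2; apply: eq_from_height; first by rewrite (dyck_size h1) (dyck_size h2).
move=> x; rewrite (dyck_size h1) => Hx.
have := raised_height r1 (x := x) ltac:(lia).
have := raised_height r2 (x := x) ltac:(lia).
case: leqP => _; lia.
Qed.

Lemma chain_filling_rcons n (ch : seq path_t) D : size ch = n ->
  chain_filling n.+1 (rcons ch D) =
  chain_filling n ch `|` leftmost (shape D `\` shape (last [::] ch)).
Proof.
move=> Hs; rewrite /chain_filling -(addn1 n) iotaD big_cat /= big_seq1 add1n.
congr fsetU.
- apply: eq_big_seq => i; rewrite mem_iota => Hi.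
  rewrite /chainRibbon /chainD -!rcons_cons !nth_rcons /= Hs.
  have -> : (i < n.+1)%N by lia.
  by have -> : (i.-1 < n.+1)%N by lia.
- rewrite /chainRibbon /chainD -!rcons_cons !nth_rcons /= Hs ltnn eqxx ltnSn -Hs.
  by have := nth_last [::] ([::] :: ch); rewrite /= => ->.
Qed.

Lemma is_chain_rcons n E (ch : seq path_t) D l : is_chain n E ch -> dyck n E ->
  dyck n.+1 D -> raised n E D l -> is_chain n.+1 D (rcons ch D).
Proof.
case=> Hs Hd Hq Hl hE hD hR; split.
- by rewrite size_rcons Hs.
- move=> i Hi; rewrite nth_rcons Hs; case: ltnP => h; first exact: Hd.
  by rewrite (_ : i = n) ?eqxx //; lia.
- move=> i Hi; rewrite !nth_rcons Hs (_ : (i < n)%N); last by lia.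
  case: (ltnP i.+1 n) => h; first exact: Hq.
  rewrite (_ : i.+1 = n) ?eqxx; last by lia.
  by rewrite (_ : i = (size ch).-1) ?nth_last ?Hl; [exact: raised_sqsub hE hD hR | lia].
- by rewrite last_rcons.
Qed.

Lemma is_chain_last n D (ch : seq path_t) : is_chain n.+1 D ch -> exists ch' l,
  [/\ ch = rcons ch' D, is_chain n (last [::] ch') ch', dyck n (last [::] ch'),
      dyck n.+1 D & raised n (last [::] ch') D l].
Proof.
case/lastP: ch => [[]//|ch' x] [Hs Hd Hq]; rewrite last_rcons => <-{D}.
rewrite size_rcons in Hs; case: Hs => Hs.
have nth_ch' i : (i < n)%N -> nth [::] (rcons ch' x) i = nth [::] ch' i.
  by move=> Hi; rewrite nth_rcons Hs Hi.
have Hx : dyck n.+1 x by have := Hd n (ltnSn n); rewrite nth_rcons Hs ltnn eqxx.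
have Hc : is_chain n (last [::] ch') ch'.
  split => // i Hi; first by rewrite -nth_ch' //; apply: Hd; lia.
  by rewrite -!nth_ch'; [apply: Hq; lia | lia | lia].
case: n Hs Hd Hq nth_ch' Hc Hx => [|n] Hs Hd Hq nth_ch' Hc Hx.
  by case: ch' Hs {Hd Hq nth_ch' Hc} => // _; exists [::], 0%N; split;
    [| | exact: dyck_nil | | exact: raised_nil].
have el : nth [::] ch' n = last [::] ch' by rewrite -nth_last Hs.
have HE : dyck n.+1 (last [::] ch') by rewrite -el -nth_ch' //; apply: Hd.
have [l HR] : exists l, raised n.+1 (last [::] ch') x l.
  apply: (sqsub_raised HE Hx).
  by have := Hq n (ltnSn _); rewrite nth_ch' // el nth_rcons Hs ltnn eqxx.
by exists ch', l.
Qed.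

Lemma laguerre_dot_up (P : path_t) F d : laguerre P F -> d \in F -> nth false P d.1.
Proof.
case=> _ Hcol Hd; apply: contraT => Hdown.
have := Hcol d.1; rewrite (negbTE Hdown) => /cardfs0_eq F0.
have : d \in [fset c in F | c.1 == d.1] by rewrite !inE Hd eqxx.
by rewrite F0 inE.
Qed.

Lemma card_column_fsetD1 (F : {fset cell}) c a : c \in F ->
  #|` [fset x in F | x.1 == a]| = ((c.1 == a) + #|` [fset x in F `\ c | x.1 == a]|)%N.
Proof.
move=> Hc; have -> : [fset x in F `\ c | x.1 == a] = [fset x in F | x.1 == a] `\ c.
  by apply/fsetP => x; rewrite !inE andbA.
by rewrite [LHS](cardfsD1 c) !inE Hc.
Qed.

Lemma laguerre_raised m (P E : path_t) l F : dyck m P -> dyck m.+1 E -> raised m P E l ->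
  laguerre P F -> laguerre E (F `|` [fset (l, nheight P l)]).
Proof.
move=> hP hE hR hL; have [Hsub Hcnt] := hL.
have [upE downP same hl] := raised_steps hP hE hR.
have Hc : (l, nheight P l) \in shape E `\` shape P.
  case: (hR) => Hl _ _; have := nheightE hP Hl.
  by rewrite (mem_raised_ribbon hP hE hR) /= !addn1; lia.
have HcF : (l, nheight P l) \notin F.
  by apply/negP => /(laguerre_dot_up hL); rewrite /= downP.
split.
  rewrite fsubUset fsub1set (fsubset_trans Hsub (raised_shape_sub hP hE hR)) /=.
  by move: Hc; rewrite in_fsetD => /andP [].
move=> a; rewrite (card_column_fsetD1 a (_ : (l, nheight P l) \in _)); last first.
  by rewrite in_fsetU in_fset1 eqxx orbT.
rewrite fsetUC fsetU1K // Hcnt /=.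
by case: (eqVneq l a) => [<-|ne]; rewrite ?upE ?downP ?same // eq_sym.
Qed.

Lemma chain_filling_laguerre n D (ch : seq path_t) :
  is_chain n D ch -> laguerre D (chain_filling n ch).
Proof.
elim: n D ch => [|n IH] D ch.
  case=> Hs _ _ <-; case: ch Hs => // _.
  rewrite /chain_filling big_nil; split => [|a]; first exact: fsub0set.
  by rewrite nth_nil; apply/eqP; rewrite cardfs_eq0; apply/eqP/fsetP => c; rewrite !inE.
move=> /is_chain_last [ch' [l [-> Hc HE HD HR]]].
rewrite chain_filling_rcons; last by case: Hc.
by rewrite (raised_leftmost HE HD HR); exact: laguerre_raised HE HD HR (IH _ _ Hc).
Qed.

(* When the step of [E] after abscissa a is up, (a, E(a)) is the topmost cell of
   column a of S(E); [c] is the rightmost dot of [F] on this upper boundary. *)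
Definition last_boundary_dot (E : path_t) (F : {fset cell}) (c : cell) : Prop :=
  [/\ c \in F, c.2 = nheight E c.1
    & forall d, d \in F -> (c.1 < d.1)%N -> d.2 != nheight E d.1].

Lemma last_boundary_dot_uniq E F c1 c2 :
  last_boundary_dot E F c1 -> last_boundary_dot E F c2 -> c1 = c2.
Proof.
case: c1 c2 => [a1 b1] [a2 b2] [h1 /= e1 k1] [h2 /= e2 k2].
case: (ltngtP a1 a2) => h.
- by have := k1 _ h2 h; rewrite /= e2 eqxx.
- by have := k2 _ h1 h; rewrite /= e1 eqxx.
- by subst a2; rewrite e1 e2.
Qed.

Lemma raised_last_boundary_dot m (P E : path_t) l F : dyck m P -> dyck m.+1 E ->
  raised m P E l -> laguerre P F ->
  last_boundary_dot E (F `|` [fset (l, nheight P l)]) (l, nheight P l).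
Proof.
move=> hP hE hR hL; case: (hR) => Hl H1 H2.
split; first by rewrite in_fsetU in_fset1 eqxx orbT.
  by rewrite /= /nheight H1.
move=> [a b]; rewrite in_fsetU in_fset1 /= => /orP [Hd Hla|/eqP [-> _]]; last by rewrite ltnn.
have up := laguerre_dot_up hL Hd; rewrite /= in up.
case: hL => Hsub _; move: (fsubsetP Hsub _ Hd).
rewrite mem_shape /inShape /= (dyck_size hP) !addn1 => Hs.
have st := height_step P a; rewrite up in st.
have ha := H2 a ltac:(lia); have na := nheightE hE (x := a) ltac:(lia).
lia.
Qed.

Lemma chain_filling_inj n D (ch1 ch2 : seq path_t) : is_chain n D ch1 -> is_chain n D ch2 ->
  chain_filling n ch1 = chain_filling n ch2 -> ch1 = ch2.
Proof.
elim: n D ch1 ch2 => [|n IH] D ch1 ch2.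
  by move=> [s1 _ _ _] [s2 _ _ _] _; case: ch1 s1 => //; case: ch2 s2.
move=> /is_chain_last [c1 [l1 [-> Hc1 HE1 HD HR1]]].
move=> /is_chain_last [c2 [l2 [-> Hc2 HE2 _ HR2]]].
rewrite !chain_filling_rcons; try by [case: Hc1 | case: Hc2].
rewrite (raised_leftmost HE1 HD HR1) (raised_leftmost HE2 HD HR2) => Heq.
have L1 := chain_filling_laguerre Hc1; have L2 := chain_filling_laguerre Hc2.
have K1 := raised_last_boundary_dot HE1 HD HR1 L1.
have K2 := raised_last_boundary_dot HE2 HD HR2 L2.
rewrite Heq in K1; have ek := last_boundary_dot_uniq K1 K2; case: (ek) => el _.
subst l2; have eE := raised_inj HE1 HE2 HD HR1 HR2.
rewrite eE in Hc1 Heq *.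
have fresh c : is_chain n (last [::] c2) c ->
    (l1, nheight (last [::] c2) l1) \notin chain_filling n c.
  move=> Hc; apply/negP => /(laguerre_dot_up (chain_filling_laguerre Hc)) /=.
  by have [_ -> _ _] := raised_steps HE2 HD HR2.
have := congr1 (fun X => X `\ (l1, nheight (last [::] c2) l1)) Heq.
rewrite /= !(fsetUC _ [fset _]) !fsetU1K ?fresh // => eF.
by rewrite (IH _ _ _ Hc1 Hc2 eF).
Qed.

(** * Lowering at the last boundary dot *)

Lemma laguerre_low_dot m (D : path_t) F q : dyck m D -> laguerre D F ->
  nth false D q -> (height D q <= 1)%R -> (q, nheight D q) \in F.
Proof.
move=> hD [Hsub Hcol] up low.
have : [fset x in F | x.1 == q] != fset0 by rewrite -cardfs_gt0 Hcol up.
case/fset0Pn => [[a b]]; rewrite !inE /= => /andP [Hd /eqP eq_aq]; subst a.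
have := fsubsetP Hsub _ Hd; rewrite mem_shape /inShape /= (dyck_size hD) => Hs.
have st := height_step D q; rewrite up in st.
have [k Hk] := height_parity D q.
have := nheightE hD (x := q) ltac:(lia); rewrite !addn1 in Hs.
by move=> nq; rewrite (_ : nheight D q = b) //; lia.
Qed.

Lemma exists_last_boundary_dot m (D : path_t) F : dyck m.+1 D -> laguerre D F ->
  exists c, last_boundary_dot D F c.
Proof.
move=> hD hL; set S := [fset d in F | d.2 == nheight D d.1].
have up0 : nth false D 0.
  have := height_step D 0; have := dyck_height_ge0 hD (x := 1) ltac:(lia).
  by rewrite height0; lia.
have S0 : S != fset0.
  apply/fset0Pn; exists (0%N, nheight D 0); rewrite !inE /= eqxx andbT.
  by apply: laguerre_low_dot hD hL up0 _; rewrite height0.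
have [c] := fset_argmax fst S0; rewrite !inE => /andP [Hc /eqP Hcb] Hmax.
exists c; split => // d Hd Hcd; apply/eqP => Hdb.
by have := Hmax d; rewrite !inE Hd Hdb eqxx leqNgt Hcd => /(_ isT).
Qed.

(* The inverse of [raised _ _ _ l]. *)
Definition lower (P : path_t) (l : nat) : path_t := take (size P - 2) (set_nth false P l false).

Lemma size_lower P l : size (lower P l) = (size P - 2)%N.
Proof. by rewrite size_take size_set_nth; case: ltnP; lia. Qed.

Lemma nth_lower P l x : nth false (lower P l) x =
  if (x < size P - 2)%N then (x != l) && nth false P x else false.
Proof.
case: ltnP => h; last by rewrite nth_default // size_lower.
by rewrite nth_take // nth_set_nth /=; case: eqP.
Qed.

Lemma height_lower P l x : nth false P l -> (x <= size P - 2)%N ->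
  height (lower P l) x = (height P x - (if (x <= l)%N then 0 else 2))%R.
Proof.
move=> up; elim: x => [|x IH] Hx; first by rewrite !height0.
rewrite !heightS IH ?nth_lower; last by lia.
rewrite (_ : (x < size P - 2)%N) /=; last by lia.
case: (eqVneq x l) => [->|ne] /=; first by rewrite leqnn ltnn up; lia.
rewrite (_ : (x < l)%N = (x <= l)%N); last by lia.
by case: (nth false P x); case: leqP; lia.
Qed.

Section Lowering.
Variables (n : nat) (D : path_t) (F : {fset cell}) (l b : nat).
Hypotheses (hD : dyck n.+1 D) (hL : laguerre D F) (hK : last_boundary_dot D F (l, b)).

Lemma last_boundary_dot_up : nth false D l /\ (l <= 2 * n)%N.
Proof.
case: hK => HF _ _; have up := laguerre_dot_up hL HF; split => //.
have [_ down] := dyck_last_step hD.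
case: (leqP l (2 * n)) => // h; move: up.
case: (eqVneq l (2 * n).+1) => [->|ne]; first by rewrite down.
by rewrite (dyck_nth_past_end hD) //=; lia.
Qed.

(* A height below 2 right of [l] would force a dot on the boundary there. *)
Lemma height_ge2_after_last_boundary_dot x : (l < x <= 2 * n)%N -> (2 <= height D x)%R.
Proof.
move=> Hx; case: (lerP 2 (height D x)) => // hx; exfalso.
have g0 := dyck_height_ge0 hD (x := x) ltac:(lia).
have [q [lq up low]] : exists q, [/\ (l < q)%N, nth false D q & (height D q <= 1)%R].
  case upx: (nth false D x); first by exists x; split => //; lia.
  have s0 := height_step D x; rewrite upx in s0.
  have g1 := dyck_height_ge0 hD (x := x.+1) ltac:(lia).
  have g2 := dyck_height_ge0 hD (x := x.+2) ltac:(lia).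
  have s1 := height_step D x.+1.
  by exists x.+1; split; lia.
case: hK => _ _ /(_ _ (laguerre_low_dot hD hL up low)) /=.
by rewrite eqxx => /(_ lq).
Qed.

Lemma lower_raised : dyck n (lower D l) /\ raised n (lower D l) D l.
Proof.
have [up Hl] := last_boundary_dot_up.
have sD := dyck_size hD; have [e1 down] := dyck_last_step hD.
have e0 := dyck_height_end hD; rewrite (_ : (2 * n.+1 = (2 * n).+2)%N) in sD e0; last by lia.
have ge2 := height_ge2_after_last_boundary_dot.
have hlow x : (x <= 2 * n)%N ->
    height (lower D l) x = (height D x - (if (x <= l)%N then 0 else 2))%R.
  by move=> Hx; apply: height_lower; rewrite // sD; lia.
have end0 : height (lower D l) (2 * n) = 0%R.
  rewrite hlow //; case: leqP => h.
    have el : l = (2 * n)%N by lia.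
    by rewrite el in up; have := height_step D (2 * n); rewrite up; lia.
  have := ge2 (2 * n)%N ltac:(lia); have := height_step D (2 * n).+1; rewrite down.
  by have := height_step D (2 * n); lia.
have hE : dyck n (lower D l).
  split; first by rewrite size_lower sD; lia.
  split => // x Hx; rewrite hlow //; case: leqP => h.
    by have := dyck_height_ge0 hD (x := x) ltac:(lia); lia.
  by have := ge2 x ltac:(lia); lia.
split => //; split => // x.
  by move=> Hx; rewrite hlow; [case: leqP; lia | lia].
case/andP => Hx1 Hx2; case: (leqP x (2 * n)) => h.
  by rewrite hlow //; case: leqP; lia.
by rewrite (_ : x = (2 * n).+1) ?e1 ?(dyck_height_past_end hE) //; lia.
Qed.

Lemma lower_column_count a : #|` [fset x in F `\ (l, b) | x.1 == a]| =
  (if nth false (lower D l) a then 1 else 0)%N.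
Proof.
have [hE hR] := lower_raised; have [upD downE same _] := raised_steps hE hD hR.
have [HF _ _] := hK; have [_ Hcol] := hL.
have := Hcol a; rewrite (card_column_fsetD1 a HF) /=.
case: (eqVneq l a) => [<-|ne]; first by rewrite upD downE /=; lia.
by rewrite same // eq_sym.
Qed.

Lemma lower_shape_dot q bq : (q, bq) \in F `\ (l, b) -> (q, bq) \in shape (lower D l).
Proof.
have [hE hR] := lower_raised; have [upD downE _ _] := raised_steps hE hD hR.
have [_ _ Hlast] := hK; have [Hsub _] := hL; case: (hR) => Hl Hbefore Hafter.
rewrite in_fsetD1 => /andP [hne Hd].
have ql : q != l.
  apply/eqP => ql; have := lower_column_count l; rewrite downE => /cardfs0_eq F0.
  have : (q, bq) \in [fset x in F `\ (l, b) | x.1 == l] by rewrite !inE hne Hd ql eqxx.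
  by rewrite F0 inE.
have upq := laguerre_dot_up hL Hd; rewrite /= in upq.
have := fsubsetP Hsub _ Hd.
rewrite !mem_shape /inShape /= (dyck_size hD) (dyck_size hE) !addn1 => Hs.
have st := height_step D q; rewrite upq in st.
have stl := height_step D l; rewrite upD in stl.
have [e1 _] := dyck_last_step hD; have e0 := dyck_height_end hD.
rewrite (_ : (2 * n.+1 = (2 * n).+2)%N) in Hs e0; last by lia.
have st2 := height_step D (2 * n).
have i1 : q.+1 = (2 * n)%N -> height D q.+1 = height D (2 * n) by move=> ->.
have i2 : q.+1 = (2 * n).+1 -> height D q.+1 = height D (2 * n).+1 by move=> ->.
have i3 : l = (2 * n)%N -> height D l = height D (2 * n) by move=> ->.
have i4 : l = (2 * n)%N -> height D l.+1 = height D (2 * n).+1 by move=> ->.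
case: (ltnP q l) => h; first by have := Hbefore q.+1 ltac:(lia); lia.
have lq : (l < q)%N by lia.
have qn : (q <= 2 * n)%N.
  case: (leqP q (2 * n)) => // h2; exfalso; move: upq.
  by rewrite (dyck_nth_past_end hD) //; lia.
have := Hlast _ Hd lq; rewrite /= => hm.
have cq := height_ge2_after_last_boundary_dot (x := q) ltac:(lia).
have nn := nheightE hD (x := q) ltac:(lia).
have [k Hk] := height_parity D q.
by have := Hafter q.+1 ltac:(lia); lia.
Qed.

Lemma laguerre_lower : laguerre (lower D l) (F `\ (l, b)).
Proof.
split; last exact: lower_column_count.
by apply/fsubsetP => [[q bq]]; exact: lower_shape_dot.
Qed.

Lemma last_boundary_dot_lower : b = nheight (lower D l) l.
Proof.
have [_ [_ Hbefore _]] := lower_raised; have [_ /= -> _] := hK.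
by rewrite /nheight Hbefore.
Qed.

End Lowering.

Lemma chain_filling_surj n D F : dyck n D -> laguerre D F ->
  exists ch, is_chain n D ch /\ chain_filling n ch = F.
Proof.
elim: n D F => [|n IH] D F hD hL.
  have := dyck_size hD; rewrite muln0; case: D hD hL => // hD [Hsub _] _.
  exists [::]; split; first by split => // i.
  rewrite /chain_filling big_nil; apply/fsetP => c; rewrite inE.
  by apply/esym/negbTE/negP => /(fsubsetP Hsub); rewrite mem_shape /inShape /=; lia.
have [[l b] hK] := exists_last_boundary_dot hD hL.
have [hE hR] := lower_raised hD hL hK; have hL' := laguerre_lower hD hL hK.
have [ch' [Hc Hf]] := IH _ _ hE hL'.
exists (rcons ch' D); split; first exact: is_chain_rcons Hc hE hD hR.
case: (Hc) => Hs _ _ Hl.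
rewrite chain_filling_rcons // Hl (raised_leftmost hE hD hR) Hf.
rewrite -(last_boundary_dot_lower hD hL hK) fsetUC fsetD1K //.
by case: hK.
Qed.

Theorem mainTheorem8 (n : nat) (D : seq bool) (hD : dyck n D) :
  [/\ (forall ch, is_chain n D ch -> laguerre D (chain_filling n ch)),
      (forall ch1 ch2, is_chain n D ch1 -> is_chain n D ch2 ->
         chain_filling n ch1 = chain_filling n ch2 -> ch1 = ch2)
    & (forall F, laguerre D F -> exists ch, is_chain n D ch /\ chain_filling n ch = F)].
Proof.
split=> [ch|ch1 ch2|F]; first exact: chain_filling_laguerre.
  exact: chain_filling_inj.
exact: chain_filling_surj.
Qed.
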